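(* Let $K=(S,L,\to)$ be a Kripke structure and $\mathcal{C}$ a colouring of $S$ such that any two states with the same colour satisfy the same atomic propositions and have the same $\mathcal{C}$-coloured traces of length two. Then $\mathcal{C}$ is consistent.
   Context: Fix a set $\mathbf{AP}$ of atomic propositions. A Kripke structure is $K=(S,L,\to)$ with $L:S\to\mathcal{P}(\mathbf{AP})$ and $\to\subseteq S\times S$ (not necessarily total); a state $s$ satisfies $p\in\mathbf{AP}$ iff $p\in L(s)$. A finite path from $s$ is a sequence $s_0,\dots,s_n$ with $s_0=s$ and $s_k\to s_{k+1}$; an infinite path is defined analogously. A colouring is a function $\mathcal{C}$ from $S$ into an arbitrary set of colours. For a path $\pi=s_0,s_1,\dots$, $\mathcal{C}(\pi)$ is obtained from $\mathcal{C}(s_0),\mathcal{C}(s_1),\dots$ by contracting each maximal (finite or infinite) block of consecutive equal colours to a single colour; for $\pi$ a path from $s$, $\mathcal{C}(\pi)$ is a $\mathcal{C}$-coloured trace of $s$, and its length is its number of entries. $\mathcal{C}$ is consistent if any two states of the same colour satisfy the same atomic propositions and have the same (finite and infinite) $\mathcal{C}$-coloured traces. *)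

Inductive len : Type := Fin (n : nat) | Inf.

Definition lt_len (i : nat) (l : len) : Prop :=
  match l with Fin n => i < n | Inf => True end.

(* A (finite or infinite) sequence: its length and its entries
   (entries at indices outside the length are irrelevant). *)
Record sequ (A : Type) : Type := Sequ { slen : len; sat : nat -> A }.
Arguments Sequ {A}.
Arguments slen {A}.
Arguments sat {A}.

Definition seq_eq {A : Type} (u v : sequ A) : Prop :=
  slen u = slen v /\ forall i, lt_len i (slen u) -> sat u i = sat v i.

Definition is_path {St : Type} (R : St -> St -> Prop) (s : St) (pi : sequ St) : Prop :=
  slen pi <> Fin 0 /\ sat pi 0 = s /\
  forall k, lt_len (S k) (slen pi) -> R (sat pi k) (sat pi (S k)).

(* t = C(pi): the colour sequence of pi with every maximal (finite or
   infinite) block of consecutive equal colours contracted to a single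
   colour.  f i is the index of the block containing position i. *)
Definition contraction {St Col : Type} (C : St -> Col) (pi : sequ St) (t : sequ Col)
  : Prop :=
  exists f : nat -> nat,
    f 0 = 0 /\
    (forall i, lt_len (S i) (slen pi) ->
        (C (sat pi (S i)) = C (sat pi i) -> f (S i) = f i) /\
        (C (sat pi (S i)) <> C (sat pi i) -> f (S i) = S (f i))) /\
    (forall i, lt_len i (slen pi) -> sat t (f i) = C (sat pi i)) /\
    (forall j, lt_len j (slen t) <-> exists i, lt_len i (slen pi) /\ f i = j).

Definition coloured_trace {St Col : Type} (R : St -> St -> Prop) (C : St -> Col)
  (s : St) (t : sequ Col) : Prop :=
  exists pi, is_path R s pi /\ contraction C pi t.

Definition traces_incl {St Col : Type} (R : St -> St -> Prop) (C : St -> Col)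
  (P : sequ Col -> Prop) (s s' : St) : Prop :=
  forall t, coloured_trace R C s t -> P t ->
    exists t', coloured_trace R C s' t' /\ seq_eq t t'.

Definition same_props {AP St : Type} (L : St -> AP -> Prop) (s s' : St) : Prop :=
  forall p : AP, L s p <-> L s' p.

Definition consistent {AP St Col : Type} (L : St -> AP -> Prop)
  (R : St -> St -> Prop) (C : St -> Col) : Prop :=
  forall s s', C s = C s' ->
    same_props L s s' /\
    traces_incl R C (fun _ => True) s s' /\
    traces_incl R C (fun _ => True) s' s.

(** Take a trace [t] of [s], realised by a path [pi], and a state [s'] of the
    same colour.  Whenever [t] changes colour from [t j] to [t (j+1)], [pi]
    contains a transition [u -> w] between these colours, i.e. [u] has the
    coloured trace [t j, t (j+1)] of length two.  Any state [v] of colour [t j]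
    then has that trace as well, so from [v] there is a finite path that stays
    in colour [t j] and then enters colour [t (j+1)].  Starting from [s'] and
    concatenating such block exits, one for each colour change of [t], gives a
    path from [s'] whose contraction is exactly [t]. *)

From Stdlib Require Import Arith Lia Classical IndefiniteDescription.

Lemma lt_len_le (i i' : nat) (l : len) : i <= i' -> lt_len i' l -> lt_len i l.
Proof. destruct l; simpl; intros; auto; lia. Qed.

Lemma lt_len_0 (l : len) : l <> Fin 0 -> lt_len 0 l.
Proof. destruct l as [[|n]|]; simpl; auto; [congruence | lia]. Qed.

Definition pair_seq {A : Type} (a b : A) : sequ A :=
  Sequ (Fin 2) (fun n => match n with 0 => a | _ => b end).

Definition stepwise (l : len) (f : nat -> nat) : Prop :=
  forall i, lt_len (S i) l -> f (S i) = f i \/ f (S i) = S (f i).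

Lemma stepwise_mono (l : len) (f : nat -> nat) :
  stepwise l f -> forall i k, lt_len i l -> k <= i -> f k <= f i.
Proof.
  intros Hf; induction i as [|i IH]; intros k Hi Hk.
  - replace k with 0 by lia; lia.
  - destruct (Nat.eq_dec k (S i)) as [->|]; [lia|].
    specialize (IH k (lt_len_le i (S i) l ltac:(lia) Hi) ltac:(lia)).
    destruct (Hf i Hi); lia.
Qed.

Lemma stepwise_jump (l : len) (f : nat -> nat) :
  f 0 = 0 -> stepwise l f ->
  forall i j, lt_len i l -> f i = S j ->
  exists i', i' < i /\ f i' = j /\ f (S i') = S j.
Proof.
  intros Hf0 Hf; induction i as [|i IH]; intros j Hi Hfi; [congruence|].
  destruct (Hf i Hi) as [E|E].
  - destruct (IH j (lt_len_le i (S i) l ltac:(lia) Hi)) as (i' & ? & ? & ?);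
      [congruence|].
    exists i'; repeat split; auto; lia.
  - exists i; repeat split; auto; congruence.
Qed.

Section Contraction.
Context {St Col : Type} (C : St -> Col).

Lemma contraction_stepwise (pi : sequ St) (f : nat -> nat) :
  (forall i, lt_len (S i) (slen pi) ->
     (C (sat pi (S i)) = C (sat pi i) -> f (S i) = f i) /\
     (C (sat pi (S i)) <> C (sat pi i) -> f (S i) = S (f i))) ->
  stepwise (slen pi) f.
Proof.
  intros Hf i Hi; destruct (Hf i Hi) as [Heq Hneq].
  destruct (classic (C (sat pi (S i)) = C (sat pi i))); auto.
Qed.

Lemma contraction_head (pi : sequ St) (t : sequ Col) :
  contraction C pi t -> slen pi <> Fin 0 ->
  lt_len 0 (slen t) /\ sat t 0 = C (sat pi 0).
Proof.
  intros (f & Hf0 & _ & Hat & Hrange) Hpi.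
  split.
  - apply Hrange; exists 0; auto using lt_len_0.
  - rewrite <- (Hat 0 (lt_len_0 _ Hpi)), Hf0; reflexivity.
Qed.

Lemma contraction_change (pi : sequ St) (t : sequ Col) (j : nat) :
  contraction C pi t -> lt_len (S j) (slen t) ->
  exists i, lt_len (S i) (slen pi) /\ C (sat pi i) = sat t j /\
    C (sat pi (S i)) = sat t (S j) /\ sat t j <> sat t (S j).
Proof.
  intros (f & Hf0 & Hstep & Hat & Hrange) Hj.
  apply Hrange in Hj as (i & Hi & Hfi).
  destruct (stepwise_jump _ f Hf0 (contraction_stepwise pi f Hstep) i j Hi Hfi)
    as (i' & Hlt & Hi' & HSi').
  assert (HS : lt_len (S i') (slen pi)) by (apply (lt_len_le _ i); auto).
  assert (Hi'pi : lt_len i' (slen pi)) by (apply (lt_len_le _ i); auto; lia).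
  exists i'; rewrite <- HSi', <- Hi', !Hat by auto.
  repeat split; auto.
  intro E; destruct (Hstep i' HS) as [Hsame _]; specialize (Hsame (eq_sym E)); lia.
Qed.

Lemma contraction_first_block (pi : sequ St) (t : sequ Col) :
  contraction C pi t -> lt_len 1 (slen t) ->
  exists m, 1 <= m /\ lt_len m (slen pi) /\
    (forall k, k < m -> C (sat pi k) = sat t 0) /\ C (sat pi m) = sat t 1.
Proof.
  intros (f & Hf0 & Hstep & Hat & Hrange) H1.
  apply Hrange in H1 as (i & Hi & Hfi).
  pose proof (contraction_stepwise pi f Hstep) as Hsw.
  destruct (stepwise_jump _ f Hf0 Hsw i 0 Hi Hfi) as (i' & Hlt & Hi' & HSi').
  exists (S i'); repeat split; [lia | apply (lt_len_le _ i); [lia | exact Hi] | |].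
  - intros k Hk.
    assert (Hk' : lt_len k (slen pi)) by (apply (lt_len_le _ i); auto; lia).
    rewrite <- (Hat k Hk'); f_equal.
    pose proof (stepwise_mono _ f Hsw i' k (lt_len_le i' i _ ltac:(lia) Hi) ltac:(lia)).
    lia.
  - rewrite <- HSi'; symmetry; apply Hat, (lt_len_le _ i); [lia | exact Hi].
Qed.

End Contraction.

Section BlockPosition.
Variable ml : nat -> nat.
Hypothesis ml_pos : forall j, 1 <= ml j.

Fixpoint block_start (j : nat) : nat :=
  match j with 0 => 0 | S j => block_start j + ml j end.

Fixpoint block_pos (i : nat) : nat * nat :=
  match i with
  | 0 => (0, 0)
  | S i => let (j, k) := block_pos i in if S k <? ml j then (j, S k) else (S j, 0)
  end.

Lemma block_start_lt (j j' : nat) : j < j' -> block_start j + ml j <= block_start j'.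
Proof. induction 1; simpl; lia. Qed.

Lemma block_start_mono (j j' : nat) : j <= j' -> block_start j <= block_start j'.
Proof. induction 1; simpl; lia. Qed.

Lemma block_pos_spec (i : nat) :
  snd (block_pos i) < ml (fst (block_pos i)) /\
  i = block_start (fst (block_pos i)) + snd (block_pos i).
Proof.
  induction i as [|i IH]; simpl.
  - specialize (ml_pos 0); lia.
  - destruct (block_pos i) as [j k]; simpl in *.
    destruct (Nat.ltb_spec (S k) (ml j)); simpl; specialize (ml_pos (S j)); lia.
Qed.

Lemma block_pos_start (j : nat) : block_pos (block_start j) = (j, 0).
Proof.
  induction j as [|j IH]; [reflexivity|].
  assert (Hk : forall k, k < ml j -> block_pos (block_start j + k) = (j, k)).
  { induction k as [|k IHk]; intro Hk; [now rewrite Nat.add_0_r|].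
    rewrite Nat.add_succ_r; simpl; rewrite IHk by lia.
    destruct (Nat.ltb_spec (S k) (ml j)); [reflexivity | lia]. }
  specialize (ml_pos j); simpl.
  replace (ml j) with (S (pred (ml j))) at 1 by lia.
  rewrite Nat.add_succ_r; simpl; rewrite Hk by lia.
  destruct (Nat.ltb_spec (S (pred (ml j))) (ml j)); [lia | reflexivity].
Qed.

(* A sequence of length [l] of blocks contributes all of its blocks except the
   last, of which only the first entry is kept. *)
Definition concat_len (l : len) : len :=
  match l with Fin N => Fin (S (block_start (pred N))) | Inf => Inf end.

Lemma concat_len_block (i : nat) (l : len) :
  lt_len 0 l -> lt_len i (concat_len l) -> lt_len (fst (block_pos i)) l.
Proof.
  destruct l as [N|]; simpl; auto; intros HN Hi.
  destruct (block_pos_spec i) as [_ Ei].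
  destruct (Nat.lt_ge_cases (fst (block_pos i)) N) as [|HjN]; auto.
  pose proof (block_start_lt (pred N) (fst (block_pos i)) ltac:(lia)).
  specialize (ml_pos (pred N)); lia.
Qed.

Lemma concat_len_next (i : nat) (l : len) :
  lt_len (S i) (concat_len l) -> lt_len (S (fst (block_pos i))) l.
Proof.
  destruct l as [N|]; simpl; auto; intro Hi.
  destruct (block_pos_spec i) as [_ Ei].
  destruct (Nat.lt_ge_cases (S (fst (block_pos i))) N) as [|HjN]; auto.
  pose proof (block_start_mono (pred N) (fst (block_pos i)) ltac:(lia)); lia.
Qed.

Lemma concat_len_offset (i : nat) (l : len) :
  lt_len i (concat_len l) -> snd (block_pos i) <> 0 ->
  lt_len (S (fst (block_pos i))) l.
Proof.
  destruct l as [N|]; simpl; auto; intros Hi Hk.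
  destruct (block_pos_spec i) as [_ Ei].
  destruct (Nat.lt_ge_cases (S (fst (block_pos i))) N) as [|HjN]; auto.
  pose proof (block_start_mono (pred N) (fst (block_pos i)) ltac:(lia)); lia.
Qed.

Lemma concat_len_start (j : nat) (l : len) :
  lt_len j l -> lt_len (block_start j) (concat_len l).
Proof.
  destruct l as [N|]; simpl; auto; intro Hj.
  pose proof (block_start_mono j (pred N) ltac:(lia)); lia.
Qed.

End BlockPosition.

Section Concatenation.
Context {St Col : Type} (R : St -> St -> Prop) (C : St -> Col).
Variables (t : sequ Col) (ml : nat -> nat) (hh : nat -> nat -> St).
Hypothesis ml_pos : forall j, 1 <= ml j.
Hypothesis t_nonempty : lt_len 0 (slen t).
Hypothesis t_change : forall j, lt_len (S j) (slen t) -> sat t j <> sat t (S j).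
Hypothesis hh_chain : forall j, hh (S j) 0 = hh j (ml j).
Hypothesis hh_start : forall j, lt_len j (slen t) -> C (hh j 0) = sat t j.
Hypothesis hh_block : forall j k, lt_len (S j) (slen t) -> k < ml j ->
  C (hh j k) = sat t j /\ R (hh j k) (hh j (S k)).

Definition concat : sequ St :=
  Sequ (concat_len ml (slen t))
       (fun i => hh (fst (block_pos ml i)) (snd (block_pos ml i))).

Lemma concat_at_S (i : nat) :
  sat concat (S i) = hh (fst (block_pos ml i)) (S (snd (block_pos ml i))).
Proof.
  unfold concat; cbn [sat block_pos].
  destruct (block_pos_spec ml ml_pos i) as [Hk _].
  destruct (block_pos ml i) as [j k]; simpl in *.
  destruct (Nat.ltb_spec (S k) (ml j)); simpl; auto.
  rewrite hh_chain; f_equal; lia.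
Qed.

Lemma concat_colour (i : nat) :
  lt_len i (slen concat) -> C (sat concat i) = sat t (fst (block_pos ml i)).
Proof.
  intro Hi; simpl in *.
  destruct (Nat.eq_dec (snd (block_pos ml i)) 0) as [E|E].
  - rewrite E; apply hh_start, concat_len_block; auto.
  - apply hh_block; [apply (concat_len_offset ml ml_pos); auto|].
    apply block_pos_spec; auto.
Qed.

Lemma concat_path : is_path R (hh 0 0) concat.
Proof.
  split; [|split].
  - simpl; destruct (slen t); discriminate.
  - reflexivity.
  - intros k Hk; rewrite concat_at_S.
    apply hh_block; [apply (concat_len_next ml ml_pos); auto|].
    apply block_pos_spec; auto.
Qed.

Lemma concat_contraction : contraction C concat t.
Proof.
  exists (fun i => fst (block_pos ml i)); split; [reflexivity | split; [|split]].
  - intros i Hi.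
    rewrite (concat_colour (S i) Hi), (concat_colour i (lt_len_le i (S i) _ ltac:(lia) Hi)).
    pose proof (t_change _ (concat_len_next ml ml_pos i _ Hi)) as Hne.
    cbn [block_pos]; destruct (block_pos ml i) as [j k]; simpl in *.
    destruct (Nat.ltb_spec (S k) (ml j)); simpl; split; auto; congruence.
  - intros i Hi; symmetry; apply concat_colour; auto.
  - intro j; split.
    + intro Hj; exists (block_start ml j); split.
      * apply concat_len_start; auto.
      * rewrite block_pos_start; auto.
    + intros (i & Hi & <-); apply concat_len_block; auto.
Qed.

Lemma coloured_trace_concat : coloured_trace R C (hh 0 0) t.
Proof. exists concat; split; [apply concat_path | apply concat_contraction]. Qed.

End Concatenation.

Section Exits.
Context {St Col : Type} (R : St -> St -> Prop) (C : St -> Col).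

Definition block_exit (v : St) (c : Col) (m : nat) (h : nat -> St) : Prop :=
  1 <= m /\ h 0 = v /\
  (forall k, k < m -> C (h k) = C v /\ R (h k) (h (S k))) /\ C (h m) = c.

Lemma coloured_trace_edge (u w : St) :
  R u w -> C u <> C w -> coloured_trace R C u (pair_seq (C u) (C w)).
Proof.
  intros Huw Hne; exists (pair_seq u w); split.
  - split; [discriminate | split; [reflexivity|]].
    intros [|k] Hk; simpl in Hk; [exact Huw | lia].
  - exists (fun n => n); split; [reflexivity | split; [|split]].
    + intros [|i] Hi; simpl in *; [split; intro; congruence | lia].
    + intros [|[|i]] Hi; simpl in *; auto; lia.
    + intro j; split; [intro Hj; exists j; auto | intros (i & ? & <-); auto].
Qed.

Lemma coloured_trace_block_exit (v : St) (t : sequ Col) :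
  coloured_trace R C v t -> lt_len 1 (slen t) ->
  exists m h, block_exit v (sat t 1) m h.
Proof.
  intros (pi & (Hpi & Hpi0 & Hsteps) & Hcon) H1.
  destruct (contraction_head C pi t Hcon Hpi) as [_ Ht0].
  destruct (contraction_first_block C pi t Hcon H1)
    as (m & Hm & Hmpi & Hblock & Hexit).
  exists m, (sat pi); repeat split; auto.
  - rewrite Hblock, Ht0, Hpi0; auto.
  - apply Hsteps, (lt_len_le _ m); auto.
Qed.

Hypothesis traces2_incl : forall u v, C u = C v ->
  traces_incl R C (fun t => slen t = Fin 2) u v.

Lemma block_exit_of_edge (u w v : St) :
  R u w -> C u <> C w -> C u = C v -> exists m h, block_exit v (C w) m h.
Proof.
  intros Huw Hne Huv.
  destruct (traces2_incl u v Huv _ (coloured_trace_edge u w Huw Hne) eq_refl)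
    as (t' & Ht' & Hlen & Hsame).
  replace (C w) with (sat t' 1) by (symmetry; apply (Hsame 1); simpl; lia).
  apply coloured_trace_block_exit; auto.
  rewrite <- Hlen; simpl; lia.
Qed.

(* Where no exit exists, the choice falls back to the one-step "exit" that
   stays at [v], so that block lengths are positive and blocks start where
   they should. *)
Lemma block_exit_choice :
  exists e : St -> Col -> nat * (nat -> St), forall v c,
    1 <= fst (e v c) /\ snd (e v c) 0 = v /\
    ((exists m h, block_exit v c m h) -> block_exit v c (fst (e v c)) (snd (e v c))).
Proof.
  destruct (functional_choice (fun (vc : St * Col) (p : nat * (nat -> St)) =>
    1 <= fst p /\ snd p 0 = fst vc /\
    ((exists m h, block_exit (fst vc) (snd vc) m h) ->
     block_exit (fst vc) (snd vc) (fst p) (snd p)))) as [e He].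
  - intros [v c]; simpl.
    destruct (classic (exists m h, block_exit v c m h)) as [(m & h & Hex)|Hno].
    + exists (m, h); simpl; split; [apply Hex | split; [apply Hex | auto]].
    + exists (1, fun _ => v); simpl; repeat split; auto; contradiction.
  - exists (fun v c => e (v, c)); intros v c; exact (He (v, c)).
Qed.

Fixpoint exit_chain (e : St -> Col -> nat * (nat -> St)) (tc : nat -> Col)
    (s : St) (j : nat) : St :=
  match j with
  | 0 => s
  | S j => let p := e (exit_chain e tc s j) (tc (S j)) in snd p (fst p)
  end.

Lemma traces_incl_of_traces2 (s s' : St) :
  C s = C s' -> traces_incl R C (fun _ => True) s s'.
Proof.
  intros Hss t (pi & Hpath & Hcon) _; exists t; split; [|split; auto].
  destruct (contraction_head C pi t Hcon (proj1 Hpath)) as [Ht0 Hts].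
  destruct block_exit_choice as [e He].
  set (b := exit_chain e (sat t) s').
  set (ml := fun j => fst (e (b j) (sat t (S j)))).
  set (hh := fun j => snd (e (b j) (sat t (S j)))).
  assert (Hexit : forall j, lt_len (S j) (slen t) -> C (b j) = sat t j ->
            block_exit (b j) (sat t (S j)) (ml j) (hh j)).
  { intros j Hj Hbj; apply He.
    destruct (contraction_change C pi t j Hcon Hj)
      as (i & Hi & Hu & Hw & Hne).
    rewrite <- Hw; apply block_exit_of_edge with (u := sat pi i);
      [apply (proj2 (proj2 Hpath)); auto | congruence | congruence]. }
  assert (Hb : forall j, lt_len j (slen t) -> C (b j) = sat t j).
  { induction j as [|j IH]; intro Hj.
    - change (C s' = sat t 0); rewrite <- Hss, Hts, (proj1 (proj2 Hpath)); reflexivity.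
    - apply (Hexit j Hj), IH, (lt_len_le _ (S j)); auto. }
  assert (Hblock : forall j k, lt_len (S j) (slen t) -> k < ml j ->
            C (hh j k) = sat t j /\ R (hh j k) (hh j (S k))).
  { intros j k Hj Hk.
    pose proof (Hb j (lt_len_le _ _ _ (Nat.le_succ_diag_r j) Hj)) as Hbj.
    destruct (Hexit j Hj Hbj) as (_ & _ & Hsteps & _); rewrite <- Hbj; auto. }
  assert (Hstart : forall j, hh j 0 = b j) by (intro; apply (proj1 (proj2 (He _ _)))).
  change s' with (b 0); rewrite <- (Hstart 0).
  apply (coloured_trace_concat R C t ml hh); auto.
  - intro j; apply (proj1 (He _ _)).
  - intros j Hj; destruct (contraction_change C pi t j Hcon Hj)
      as (? & ? & ? & ? & ?); auto.
  - intros j Hj; rewrite Hstart; auto.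
Qed.

End Exits.

Theorem lemma2p5 (AP St Col : Type) (L : St -> AP -> Prop) (R : St -> St -> Prop)
  (C : St -> Col) :
  (forall s s', C s = C s' ->
     same_props L s s' /\
     traces_incl R C (fun t => slen t = Fin 2) s s' /\
     traces_incl R C (fun t => slen t = Fin 2) s' s) ->
  consistent L R C.
Proof.
  intros H s s' Hss.
  assert (H2 : forall u v, C u = C v -> traces_incl R C (fun t => slen t = Fin 2) u v)
    by (intros u v Huv; apply (H u v Huv)).
  split; [apply (H s s' Hss)|].
  split; apply traces_incl_of_traces2; auto.
Qed.
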